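(* Let $\mathbf I_F$ be a weakly faithful generalized Fisher information and $\{\mathcal N^\theta_{A\to B}\}_\theta$ a family of quantum channels. Consider any $n$-round sequential strategy consisting of a $\theta$-independent input state $\rho_{R_1A_1}$ and $\theta$-independent channels $\mathcal S^i_{R_iB_i\to R_{i+1}A_{i+1}}$, $i=1,\dots,n-1$, and let $$\omega^\theta_{R_nB_n}:=(\mathcal N^\theta_{A_n\to B_n}\circ\mathcal S^{n-1}\circ\cdots\circ\mathcal S^1\circ\mathcal N^\theta_{A_1\to B_1})(\rho_{R_1A_1}).$$ Then $\mathbf I_F(\theta;\{\omega^\theta_{R_nB_n}\}_\theta)\le n\cdot\mathbf I^{\mathcal A}_F(\theta;\{\mathcal N^\theta_{A\to B}\}_\theta)$.
   Context: Finite-dimensional systems. A generalized Fisher information $\mathbf I_F$ assigns to each $\theta$ and each family $\{\rho^\theta_A\}_\theta$ of density operators an extended real number such that $\mathbf I_F(\theta;\{\rho^\theta_A\}_\theta)\ge\mathbf I_F(\theta;\{\mathcal N_{A\to B}(\rho^\theta_A)\}_\theta)$ for every $\theta$-independent quantum channel $\mathcal N$; it is weakly faithful if it vanishes on $\theta$-independent families. The amortized Fisher information of a channel family is $\mathbf I^{\mathcal A}_F(\theta;\{\mathcal N^\theta_{A\to B}\}_\theta):=\sup_{\{\rho^\theta_{RA}\}_\theta}[\mathbf I_F(\theta;\{\mathcal N^\theta_{A\to B}(\rho^\theta_{RA})\}_\theta)-\mathbf I_F(\theta;\{\rho^\theta_{RA}\}_\theta)]$, supremum over families of states with arbitrary reference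 system $R$. Channels act on the indicated subsystems and as identity elsewhere. *)

From HB Require Import structures.
From mathcomp Require Import all_boot all_order all_algebra.
From mathcomp Require Import complex mxtens.
From mathcomp Require Import classical_sets boolp reals constructive_ereal ereal.

Set Implicit Arguments.
Unset Strict Implicit.
Unset Printing Implicit Defensive.

Import Order.TTheory GRing.Theory Num.Theory.
Local Open Scope ring_scope.

Section Quantum.
Variable R : realType.
Local Notation C := (R[i]).

Definition adjmx (m n : nat) (A : 'M[C]_(m, n)) : 'M[C]_(n, m) :=
  \matrix_(i, j) (A j i)^*.

Definition psd (d : nat) (A : 'M[C]_d) : Prop :=
  forall v : 'cV[C]_d, 0 <= (adjmx v *m A *m v) 0 0.

Definition density (d : nat) (rho : 'M[C]_d) : Prop :=
  psd rho /\ \tr rho = 1.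

(* id_k (x) Phi acting on the composite system k (x) m, with the reference
   system k first (Kronecker product convention of mxtens). *)
Definition id_tens (k m n : nat) (Phi : 'M[C]_m -> 'M[C]_n)
  (X : 'M[C]_(k * m)) : 'M[C]_(k * n) :=
  \sum_(a < k) \sum_(b < k)
     tensmx (delta_mx a b : 'M[C]_k)
            (Phi (\matrix_(i, j) X (mxtens_index (a, i)) (mxtens_index (b, j)))).
Arguments id_tens k {m n} Phi X.

Definition channel (m n : nat) (Phi : 'M[C]_m -> 'M[C]_n) : Prop :=
  [/\ linear Phi,
      (forall (k : nat) (X : 'M[C]_(k * m)), psd X -> psd (id_tens k Phi X))
    & (forall X : 'M[C]_m, \tr (Phi X) = \tr X)].

Definition info_fun := forall d : nat, R -> (R -> 'M[C]_d) -> \bar R.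

Definition density_family (d : nat) (rho : R -> 'M[C]_d) : Prop :=
  forall t, density (rho t).

Definition gen_fisher (I : info_fun) : Prop :=
  forall (d d' : nat) (N : 'M[C]_d -> 'M[C]_d') (rho : R -> 'M[C]_d) (theta : R),
    channel N -> density_family rho ->
    (I d' theta (fun t => N (rho t)) <= I d theta rho)%E.

Definition weakly_faithful (I : info_fun) : Prop :=
  forall (d : nat) (sigma : 'M[C]_d) (theta : R),
    density sigma -> I d theta (fun _ => sigma) = 0%E.

Definition amortized (I : info_fun) (dA dB : nat)
  (N : R -> 'M[C]_dA -> 'M[C]_dB) (theta : R) : \bar R :=
  ereal_sup [set x | exists (r : nat) (rho : R -> 'M[C]_(r * dA)),
     density_family rho /\
     x = (I (r * dB)%N theta (fun t => id_tens r (N t) (rho t))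
          - I (r * dA)%N theta rho)%E].

(* Output of the n-round sequential strategy: reference dimensions r k,
   input state rho1 on R_1 A_1, interleaved channels S k : R_{k+1}B -> R_{k+2}A
   (0-indexed), unknown channel applied in every round.
   seq_output k theta is the state on R_{k+1} B_{k+1} after k+1 uses. *)
Fixpoint seq_output (dA dB : nat) (N : R -> 'M[C]_dA -> 'M[C]_dB)
  (r : nat -> nat) (rho1 : 'M[C]_(r 0%N * dA))
  (S : forall k : nat, 'M[C]_(r k * dB) -> 'M[C]_(r k.+1 * dA))
  (k : nat) (theta : R) : 'M[C]_(r k * dB) :=
  match k as k0 return 'M[C]_(r k0 * dB) with
  | 0%N => id_tens (r 0%N) (N theta) rho1
  | k'.+1 => id_tens (r k'.+1) (N theta)
               (S k' (seq_output N rho1 S k' theta))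
  end.

End Quantum.

(* Write omega_k for the state after k+1 uses of N^theta (seq_output k) and
   sigma_k := S_k(omega_k) for the state fed into the next use, so that
   omega_(k+1) = (id (x) N^theta)(sigma_k).  The proof is a telescoping sum:
   - every omega_k and sigma_k is a family of density operators, because
     channels and their extensions id (x) Phi preserve density operators
     (positivity via complete positivity with a trivial reference system,
     trace via trace preservation);
   - hence the definition of the amortized information A gives
     I(omega_(k+1)) - I(sigma_k) <= A, while data processing under the
     theta-independent channel S_k gives I(sigma_k) <= I(omega_k);
   - for k = 0 the input rho_1 is theta-independent, so I(rho_1) = 0 by weak
     faithfulness and I(omega_0) <= A.
   Induction on k yields I(omega_k) <= (k+1) A; the only delicate point is the
   arithmetic in the extended reals, isolated in amortization_step. *)

From HB Require Import structures.
From mathcomp Require Import all_boot all_order all_algebra.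
From mathcomp Require Import complex mxtens.
From mathcomp Require Import classical_sets boolp reals constructive_ereal ereal.
Import Order.TTheory GRing.Theory Num.Theory.
Local Open Scope ring_scope.

Section Channels.
Variable R : realType.
Local Notation C := (R[i]).

Lemma sum_tens_index (V : nmodType) (k m : nat) (F : 'I_(k * m) -> V) :
  \sum_p F p = \sum_(a < k) \sum_(i < m) F (mxtens_index (a, i)).
Proof.
rewrite pair_big /= (reindex (@mxtens_index k m)) /=; first by apply: eq_bigr => -[].
by exists (@mxtens_unindex k m) => ? _; [apply: mxtens_indexK | apply: mxtens_unindexK].
Qed.

Lemma mxtrace_tens (k m : nat) (A : 'M[C]_k) (B : 'M[C]_m) :
  \tr (tensmx A B) = \tr A * \tr B.
Proof.
rewrite /mxtrace mulr_sum; apply: eq_bigr => p _.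
by case: (mxtens_indexP p) => a i; rewrite tensmxE mxtens_indexK.
Qed.

Lemma mxtrace_delta (k : nat) (a b : 'I_k) :
  \tr (delta_mx a b : 'M[C]_k) = (a == b)%:R.
Proof.
rewrite /mxtrace (bigD1 a) //= big1 ?addr0; first by rewrite mxE eqxx.
by move=> c /negPf ca; rewrite mxE ca.
Qed.

(* id (x) Phi is trace preserving whenever Phi is: only the diagonal blocks
   delta_mx a a contribute to the trace. *)
Lemma mxtrace_id_tens (k m n : nat) (Phi : 'M[C]_m -> 'M[C]_n) (X : 'M[C]_(k * m)) :
  channel Phi -> \tr (id_tens Phi X) = \tr X.
Proof.
case=> _ _ trPhi; rewrite /id_tens raddf_sum [in RHS]/mxtrace sum_tens_index.
apply: eq_bigr => a _; rewrite raddf_sum (bigD1 a) //= big1 ?addr0.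
  rewrite mxtrace_tens mxtrace_delta eqxx mul1r trPhi.
  by apply: eq_bigr => i _; rewrite mxE.
by move=> b /negPf ba; rewrite mxtrace_tens mxtrace_delta eq_sym ba mul0r.
Qed.

Lemma quad_formE (d : nat) (A : 'M[C]_d) (v : 'cV[C]_d) :
  (adjmx v *m A *m v) 0 0 = \sum_j \sum_i (v i 0)^* * A i j * v j 0.
Proof.
rewrite mxE; apply: eq_bigr => j _; rewrite mxE big_distrl /=.
by apply: eq_bigr => i _; rewrite !mxE.
Qed.

Lemma psd_trivial_ref {m : nat} {M : 'M[C]_(1 * m)} {X : 'M[C]_m} :
  (forall i j, M (mxtens_index (ord0, i)) (mxtens_index (ord0, j)) = X i j) ->
  psd M <-> psd X.
Proof.
move=> MX; pose restr (w : 'cV[C]_(1 * m)) := \col_i w (mxtens_index (ord0, i)) 0.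
have quad_restr w : (adjmx w *m M *m w) 0 0 = (adjmx (restr w) *m X *m restr w) 0 0.
  rewrite !quad_formE sum_tens_index big_ord1; apply: eq_bigr => j _.
  by rewrite sum_tens_index big_ord1; apply: eq_bigr => i _; rewrite !mxE MX.
split=> psdM v; last by rewrite quad_restr.
pose w : 'cV[C]_(1 * m) := \col_p v (mxtens_unindex p).2 0.
suff -> : v = restr w by rewrite -quad_restr.
by apply/matrixP => i j; rewrite !mxE mxtens_indexK ord1.
Qed.

(* Complete positivity for k = 1 yields positivity of a channel. *)
Lemma channel_psd (m n : nat) (Phi : 'M[C]_m -> 'M[C]_n) (X : 'M[C]_m) :
  channel Phi -> psd X -> psd (Phi X).
Proof.
case=> _ cpPhi _ psdX.
pose M : 'M[C]_(1 * m) :=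
  \matrix_(p, q) X (mxtens_unindex p).2 (mxtens_unindex q).2.
have MX i j : M (mxtens_index (ord0, i)) (mxtens_index (ord0, j)) = X i j.
  by rewrite mxE !mxtens_indexK.
have PhiMX i j : @id_tens R 1 m n Phi M (mxtens_index (ord0, i))
                   (mxtens_index (ord0, j)) = Phi X i j.
  rewrite /id_tens !big_ord1 tensmxE mxE eqxx mul1r.
  by congr (Phi _ i j); apply/matrixP => i' j'; rewrite !mxE !mxtens_indexK.
by apply/(psd_trivial_ref PhiMX)/cpPhi/(psd_trivial_ref MX).
Qed.

Lemma channel_density (m n : nat) (Phi : 'M[C]_m -> 'M[C]_n) (X : 'M[C]_m) :
  channel Phi -> density X -> density (Phi X).
Proof.
move=> chPhi [psdX trX]; split; first exact: channel_psd.
by case: chPhi => _ _ ->.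
Qed.

Lemma id_tens_density (k m n : nat) (Phi : 'M[C]_m -> 'M[C]_n) (X : 'M[C]_(k * m)) :
  channel Phi -> density X -> density (id_tens Phi X).
Proof.
move=> chPhi [psdX trX]; split; last by rewrite mxtrace_id_tens.
by case: chPhi => _ cpPhi _; apply: cpPhi.
Qed.

End Channels.

Local Open Scope ereal_scope.

(* The
   infinite cases are handled separately: a = +oo is trivial, and a = -oo
   forces y = -oo and then x = -oo. *)
Lemma amortization_step {R : realType} {k : nat} {x y a : \bar R} :
  x - y <= a -> y <= (k.+1%:R)%:E * a -> x <= (k.+2%:R)%:E * a.
Proof.
have -> : (k.+2%:R)%:E = 1 + (k.+1%:R)%:E :> \bar R by rewrite -EFinD -add1n natrD.
rewrite ge0_muleDl ?lee_fin // mul1e.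
case: a => [a | | ] xy_le y_le.
- rewrite lee_subel_addr // in xy_le.
  by apply: (le_trans xy_le); rewrite leeD2l.
- by rewrite gt0_muley ?lte_fin ?ltr0Sn // leey.
- move: y_le; rewrite gt0_muleNy ?lte_fin ?ltr0Sn // leeNy_eq => /eqP yNy.
  by move: xy_le; rewrite yNy; case: x.
Qed.

Section SequentialStrategy.
Context {R : realType} {I : info_fun R} {dA dB : nat}.
Context {N : R -> 'M[R[i]]_dA -> 'M[R[i]]_dB}.
Hypothesis N_channel : forall t, channel (N t).
Context {r : nat -> nat} {rho1 : 'M[R[i]]_(r 0%N * dA)}.
Hypothesis rho1_density : density rho1.
Context {S : forall k : nat, 'M[R[i]]_(r k * dB) -> 'M[R[i]]_(r k.+1 * dA)}.

Local Notation omega := (seq_output N rho1 S).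

Lemma amortized_ub (theta : R) {rr : nat} {rho : R -> 'M[R[i]]_(rr * dA)} :
  density_family rho ->
  I (rr * dB)%N theta (fun t => id_tens (N t) (rho t)) - I (rr * dA)%N theta rho
    <= amortized I N theta.
Proof. by move=> rho_density; apply: ereal_sup_ubound; exists rr, rho. Qed.

Lemma seq_output_density {k : nat} :
  (forall j, (j < k)%N -> channel (S j)) -> density_family (omega k).
Proof.
elim: k => [|k IHk] S_channel t /=; first exact: id_tens_density.
apply: id_tens_density => //; apply: channel_density; first exact: S_channel.
by apply: IHk => // j jk; apply: S_channel; apply: ltnW.
Qed.

Hypothesis I_gen_fisher : gen_fisher I.
Hypothesis I_weakly_faithful : weakly_faithful I.

Lemma seq_output_bound (theta : R) (k : nat) :
  (forall j, (j < k)%N -> channel (S j)) ->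
  I (r k * dB)%N theta (omega k) <= (k.+1%:R)%:E * amortized I N theta.
Proof.
elim: k => [|k IHk] S_channel.
  have := amortized_ub theta (fun=> rho1_density).
  by rewrite I_weakly_faithful // sube0 mul1e.
have S_prev j : (j < k)%N -> channel (S j) by move=> jk; apply/S_channel/ltnW.
have sigma_density : density_family (fun t => S k (omega k t)).
  move=> t; apply: channel_density; first exact: S_channel.
  exact: (seq_output_density S_prev t).
apply: (amortization_step (amortized_ub theta sigma_density)).
apply: le_trans (IHk S_prev); apply: I_gen_fisher; first exact: S_channel.
exact: (seq_output_density S_prev).
Qed.

End SequentialStrategy.

Theorem mainTheorem5 (R : realType) (I : info_fun R)
  (HI : gen_fisher I) (Hwf : weakly_faithful I)
  (dA dB : nat) (N : R -> 'M[R[i]]_dA -> 'M[R[i]]_dB)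
  (HN : forall t, channel (N t))
  (n : nat) (Hn : (0 < n)%N)
  (r : nat -> nat) (rho1 : 'M[R[i]]_(r 0%N * dA)) (Hrho1 : density rho1)
  (S : forall k : nat, 'M[R[i]]_(r k * dB) -> 'M[R[i]]_(r k.+1 * dA))
  (HS : forall k : nat, (k < n.-1)%N -> channel (S k))
  (theta : R) :
  (I (r n.-1 * dB)%N theta (seq_output N rho1 S n.-1)
     <= (n%:R)%:E * amortized I N theta)%E.
Proof.
rewrite -[n in n%:R](prednK Hn).
exact: (seq_output_bound HN Hrho1 HI Hwf theta n.-1 HS).
Qed.
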